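(* Let $n \geq 3$. If $Z : \mathcal{T}_o^n \to \mathcal{K}_o^n$ is an $\mathrm{SL}(n)$ contravariant $L_\infty$ Minkowski valuation, then $ZT= \{o\}$ for every $T \in \mathcal{T}_o^n$ with $\dim T < n$.
   Context: $\mathcal{K}_o^n$ denotes the set of convex bodies (compact convex sets) in $\mathbb{R}^n$ containing the origin $o$, and $\mathcal{T}_o^n$ the set of simplices (of any dimension) in $\mathbb{R}^n$ having the origin as one of their vertices. For $K,L\in\mathcal{K}_o^n$, $K+_\infty L$ is the convex body with support function $\max\{h_K,h_L\}$ ($h$ denoting support functions), i.e. the convex hull of $K\cup L$. $Z$ is an $L_\infty$ Minkowski valuation on $\mathcal{T}_o^n$ if $Z(K\cup L)+_\infty Z(K\cap L)=ZK+_\infty ZL$ whenever $K,L,K\cup L,K\cap L\in\mathcal{T}_o^n$. $Z$ is $\mathrm{SL}(n)$ contravariant if $Z(\phi K)=\phi^{-t}ZK$ for all $K$ and all $\phi\in\mathrm{SL}(n)$. *)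

From mathcomp Require Import all_boot all_order all_algebra.
From mathcomp Require Import all_classical all_reals all_analysis.
Set Implicit Arguments. Unset Strict Implicit. Unset Printing Implicit Defensive.
Import Order.TTheory GRing.Theory Num.Theory.
Import numFieldNormedType.Exports.
Local Open Scope classical_set_scope.
Local Open Scope ring_scope.

Definition convex_set (R : realType) (n : nat) (C : set 'cV[R]_n) : Prop :=
  forall x y t, C x -> C y -> 0 <= t -> t <= 1 -> C ((1 - t) *: x + t *: y).

Definition conv_hull (R : realType) (n : nat) (A : set 'cV[R]_n) : set 'cV[R]_n :=
  [set x | forall C, convex_set C -> A `<=` C -> C x].

Definition convex_body_o (R : realType) (n : nat) (K : set 'cV[R]_n) : Prop :=
  compact K /\ convex_set K /\ K 0.

(* T_o^n : simplices (of any dimension k) with the origin as a vertex: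
   T = conv{0, v_1, ..., v_k} with v_1..v_k (columns of V) linearly independent *)
Definition simplex_o (R : realType) (n : nat) (T : set 'cV[R]_n) : Prop :=
  exists (k : nat) (V : 'M[R]_(n, k)),
    row_free V^T /\ T = conv_hull ([set 0] `|` [set col j V | j in setT]).

Definition linf_add (R : realType) (n : nat) (K L : set 'cV[R]_n) : set 'cV[R]_n :=
  conv_hull (K `|` L).

Definition affdim_ge (R : realType) (n : nat) (A : set 'cV[R]_n) (k : nat) : Prop :=
  exists (a0 : 'cV[R]_n) (V : 'M[R]_(n, k)),
    A a0 /\ (forall j, A (a0 + col j V)) /\ row_free V^T.

Definition lin_image (R : realType) (n : nat) (phi : 'M[R]_n) (K : set 'cV[R]_n) :=
  [set phi *m x | x in K].

Definition maps_To_Ko (R : realType) (n : nat) (Z : set 'cV[R]_n -> set 'cV[R]_n) :=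
  forall T, simplex_o T -> convex_body_o (Z T).

Definition Linf_valuation (R : realType) (n : nat) (Z : set 'cV[R]_n -> set 'cV[R]_n) :=
  forall K L, simplex_o K -> simplex_o L -> simplex_o (K `|` L) -> simplex_o (K `&` L) ->
    linf_add (Z (K `|` L)) (Z (K `&` L)) = linf_add (Z K) (Z L).

Definition SL_contravariant (R : realType) (n : nat) (Z : set 'cV[R]_n -> set 'cV[R]_n) :=
  forall K (phi : 'M[R]_n), simplex_o K -> \det phi = 1 ->
    Z (lin_image phi K) = lin_image (invmx phi)^T (Z K).

(* After a change of coordinates in SL(n), a simplex of dimension k < n is the
   standard simplex T = conv {0, e_1, ..., e_k} in R^(k+m), m >= 1.  T is fixed by
   every [[1, B], [0, D]] with det D = 1, so by contravariance the compact set Z T is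
   invariant under all [[1, 0], [C, D]]; hence Z T lies in {0} x R^m, and for m >= 2 a
   diagonal D with unbounded entries forces Z T = {0}.  For m = 1 cut T along
   x_1 = x_2 into two simplices; each is the image of T under a map of determinant one
   (determinant 1/2 on R^k, and 2 on the last axis) whose transposed inverse halves
   {0} x R.  The valuation property then gives Z T <= conv (Z T / 2) = Z T / 2, so Z T
   is stable under doubling, hence {0}. *)

From Pilot Require Import Defs.
From mathcomp Require Import all_boot all_order all_algebra.
From mathcomp Require Import all_classical all_reals all_analysis.
From mathcomp Require Import lra.
Set Implicit Arguments. Unset Strict Implicit. Unset Printing Implicit Defensive.
Import Order.TTheory GRing.Theory Num.Theory.
Import numFieldNormedType.Exports.
Local Open Scope classical_set_scope.
Local Open Scope ring_scope.

Lemma image_setI_inj (aT rT : Type) (f : aT -> rT) (A B : set aT) :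
  injective f -> f @` (A `&` B) = f @` A `&` f @` B.
Proof.
move=> f_inj; apply/seteqP; split; first exact: sub_image_setI.
by move=> _ [[x Ax <-] [y By /f_inj y_eq_x]]; exists x => //; split; rewrite // -y_eq_x.
Qed.

Section Osimplex.
Variable R : realType.

Definition simplex_weights k : set 'cV[R]_k :=
  [set t | (forall i, 0 <= t i 0) /\ \sum_i t i 0 <= 1].

Definition osimplex n k (V : 'M[R]_(n, k)) : set 'cV[R]_n :=
  [set V *m t | t in @simplex_weights k].

Lemma sum_indicator k (j : 'I_k) : \sum_i ((i == j)%:R : R) = 1.
Proof. by rewrite (bigD1 j) //= big1 ?eqxx ?addr0 // => i /negbTE ->. Qed.

Lemma simplex_weights0 k : simplex_weights (0 : 'cV[R]_k).
Proof. by split=> [i|]; rewrite ?mxE // big1 // => i _; rewrite mxE. Qed.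

Lemma simplex_weights_delta k (j : 'I_k) : simplex_weights (delta_mx j 0).
Proof.
split=> [i|]; first by rewrite mxE ler0n.
by under eq_bigr => i _ do rewrite mxE andbT; rewrite sum_indicator.
Qed.

Lemma convex_osimplex n k (V : 'M[R]_(n, k)) : Defs.convex_set (osimplex V).
Proof.
move=> _ _ s [t [t_ge0 t_le1] <-] [u [u_ge0 u_le1] <-] s_ge0 s_le1.
exists ((1 - s) *: t + s *: u); last by rewrite mulmxDr !scalemxAr.
have s'_ge0 : 0 <= 1 - s by rewrite subr_ge0.
split=> [i|]; first by rewrite !mxE addr_ge0 ?mulr_ge0.
under eq_bigr => i _ do rewrite !mxE.
rewrite big_split /= -!mulr_sumr.
apply: (le_trans (y := (1 - s) * 1 + s * 1)); last by rewrite !mulr1 subrK.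
by rewrite lerD // ler_wpM2l.
Qed.

Lemma simplex_weights_split k (t : 'cV[R]_k) (j : 'I_k) : simplex_weights t ->
  exists2 u, simplex_weights u &
    (forall i, u i 0 != 0 -> (t i 0 != 0) && (i != j)) /\
    t = (1 - t j 0) *: u + t j 0 *: delta_mx j 0.
Proof.
move=> [t_ge0 t_le1]; set a := t j 0.
have sum_t : \sum_i t i 0 = a + \sum_(i | i != j) t i 0 by rewrite (bigD1 j).
have rest_ge0 : 0 <= \sum_(i | i != j) t i 0 by rewrite sumr_ge0.
have a_le1 : a <= 1 by apply: le_trans t_le1; rewrite sum_t lerDl.
(* For [a = 1] this divides by zero, but then [t] is the vertex [delta_mx j 0]. *)
pose u := (1 - a)^-1 *: (t - a *: delta_mx j 0).
have uE i : u i 0 = (1 - a)^-1 * (t i 0 - a * (i == j)%:R).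
  by rewrite !mxE eqxx andbT.
exists u; last split.
- split=> [i|].
    rewrite uE mulr_ge0 ?invr_ge0 ?subr_ge0 //.
    by case: (eqVneq i j) => [->|_] /=; rewrite ?mulr1 ?mulr0 ?subrr ?subr0.
  under eq_bigr => i _ do rewrite uE.
  rewrite -mulr_sumr sumrB -mulr_sumr sum_t.
  rewrite sum_indicator mulr1 [a + _]addrC addrK.
  have [->|a_neq1] := eqVneq a 1; first by rewrite subrr invr0 mul0r.
  have a_lt1 : a < 1 by rewrite lt_neqAle a_neq1.
  by rewrite ler_pdivrMl ?subr_gt0 // mulr1 lerBrDl -sum_t.
- move=> i; rewrite uE; case: (eqVneq i j) => [->|_]; first by rewrite mulr1 subrr mulr0 eqxx.
  by rewrite mulr0 subr0 andbT; apply: contraNneq => ->; rewrite mulr0.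
- have [a1|a_neq1] := eqVneq a 1; last first.
    by rewrite scalerA divff ?scale1r ?subrK // subr_eq0 eq_sym.
  have rest0 : \sum_(i | i != j) t i 0 = 0.
    by apply/le_anti; rewrite rest_ge0 andbT -(lerD2l a) addr0 -sum_t a1.
  apply/matrixP => i l; rewrite ord1 a1 subrr scale0r add0r scale1r mxE eqxx andbT.
  have [->|ij] := eqVneq i j; first by rewrite -a1.
  by move/psumr_eq0P: rest0 => ->.
Qed.

Lemma osimplex_sub_convex n k (V : 'M[R]_(n, k)) (C : set 'cV[R]_n) :
  Defs.convex_set C -> C 0 -> (forall j, C (col j V)) -> osimplex V `<=` C.
Proof.
move=> convC C0 Ccol _ [t wt <-].
have [N] := ubnP #|[set i | t i 0 != 0]%SET|.
elim: N t wt => // N IHN t wt supp_lt.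
have [t0|[j tj_neq0]] := set_0Vmem [set i | t i 0 != 0]%SET.
  suff -> : t = 0 by rewrite mulmx0.
  apply/matrixP => i l; rewrite ord1 mxE.
  by move/setP/(_ i): t0; rewrite !inE => /negbFE/eqP.
have [u wu [supp_u ->]] := simplex_weights_split j wt.
rewrite mulmxDr -!scalemxAr -colE.
have [t_ge0 t_le1] := wt.
have tj_le1 : t j 0 <= 1 by apply: le_trans t_le1; rewrite (bigD1 j) //= lerDl sumr_ge0.
apply: convC (Ccol j) (t_ge0 j) tj_le1.
apply: IHN => //; rewrite -ltnS (leq_trans _ supp_lt) // ltnS; apply: proper_card.
apply/properP; split.
  by apply/fintype.subsetP => i; rewrite !inE => /supp_u /andP[].
by exists j => //; rewrite !inE; apply/negP => /supp_u; rewrite eqxx andbF.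
Qed.

Lemma conv_hull_osimplex n k (V : 'M[R]_(n, k)) :
  conv_hull ([set 0] `|` [set col j V | j in setT]) = osimplex V.
Proof.
apply/seteqP; split=> [x hullx|x Vx C convC sub_C].
  apply: hullx; first exact: convex_osimplex.
  move=> _ [->|[j _ <-]].
    by exists 0; [exact: simplex_weights0|rewrite mulmx0].
  by exists (delta_mx j 0); [exact: simplex_weights_delta|rewrite colE].
by apply: (osimplex_sub_convex convC) Vx => [|j]; apply: sub_C; [left|right; exists j].
Qed.

Lemma osimplex_mulmx n l k (U : 'M[R]_(n, l)) (W : 'M[R]_(l, k)) :
  osimplex (U *m W) = [set U *m x | x in osimplex W].
Proof.
apply/seteqP; split=> _ [t wt <-]; first by exists (W *m t); [exists t|rewrite mulmxA].
by case: wt => s ws <-; exists s; rewrite ?mulmxA.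
Qed.

Lemma simplex_o_osimplex n k (V : 'M[R]_(n, k)) : row_free V^T -> simplex_o (osimplex V).
Proof. by move=> freeV; exists k, V; rewrite conv_hull_osimplex. Qed.

Lemma simplex_oP n (T : set 'cV[R]_n) : simplex_o T ->
  exists k (V : 'M[R]_(n, k)), row_free V^T /\ T = osimplex V.
Proof. by move=> [k [V [freeV ->]]]; exists k, V; rewrite conv_hull_osimplex. Qed.

Lemma row_free_trmx_mul n l k (U : 'M[R]_(n, l)) (W : 'M[R]_(l, k)) :
  row_free U^T -> row_free W^T -> row_free (U *m W)^T.
Proof. by move=> freeU freeW; rewrite /row_free trmx_mul mxrankMfree. Qed.

Lemma simplex_o_lin_image n (phi : 'M[R]_n) (T : set 'cV[R]_n) :
  phi \in unitmx -> simplex_o T -> simplex_o (lin_image phi T).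
Proof.
move=> phi_unit /simplex_oP[k [V [freeV ->]]].
rewrite /lin_image -osimplex_mulmx; apply/simplex_o_osimplex/row_free_trmx_mul => //.
by rewrite row_free_unit unitmx_tr.
Qed.

Lemma affdim_ge_osimplex n k (V : 'M[R]_(n, k)) :
  row_free V^T -> affdim_ge (osimplex V) k.
Proof.
move=> freeV; exists 0, V; split; first by exists 0; [exact: simplex_weights0|rewrite mulmx0].
split=> // j; exists (delta_mx j 0); first exact: simplex_weights_delta.
by rewrite add0r colE.
Qed.

Lemma compact_coord_bounded n (K : set 'cV[R]_n) (i : 'I_n) :
  compact K -> exists M : R, forall x, K x -> `|x i 0| <= M.
Proof.
move=> compactK.
have /compact_bounded[M [_ HM]] : compact ((fun x : 'cV[R]_n => x i 0) @` K).
  by apply: continuous_compact => //; apply: continuous_subspaceT => x; apply: coord_continuous.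
by exists (M + 1) => x Kx; apply: (HM (M + 1)); [rewrite ltrDl|exists x].
Qed.

Lemma compact_unbounded_coord_eq0 n (K : set 'cV[R]_n) (i : 'I_n) (c : R) : compact K ->
  (c != 0 -> forall N : nat, exists2 y, K y & N%:R * `|c| <= `|y i 0|) -> c = 0.
Proof.
move=> /compact_coord_bounded-/(_ i)[M HM] unbounded; apply/eqP/negPn/negP => c_neq0.
have c_gt0 : 0 < `|c| by rewrite normr_gt0.
have [y Ky Ny] := unbounded c_neq0 (Num.Def.archi_bound (`|M| / `|c|)).
have := archi_boundP (divr_ge0 (normr_ge0 M) (ltW c_gt0)); rewrite ltr_pdivrMr // => M_lt.
have := le_trans (le_trans Ny (HM y Ky)) (ler_norm M).
by rewrite leNgt M_lt.
Qed.
End Osimplex.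

Section StdSimplex.
Variables (R : realType) (k m : nat).

Definition std_frame : 'M[R]_(k + m, k) := col_mx 1%:M 0.
Definition std_simplex : set 'cV[R]_(k + m) := osimplex std_frame.

Lemma std_frame_inj : injective (mulmx std_frame : 'cV[R]_k -> 'cV[R]_(k + m)).
Proof.
apply: (can_inj (g := mulmx std_frame^T)) => x.
by rewrite mulmxA tr_col_mx trmx1 trmx0 mul_row_col mul1mx mul0mx addr0 mul1mx.
Qed.

Lemma row_free_std_frame : row_free std_frame^T.
Proof.
apply/row_freeP; exists std_frame.
by rewrite tr_col_mx trmx1 trmx0 mul_row_col mul1mx mul0mx addr0.
Qed.

Lemma simplex_o_std : simplex_o std_simplex.
Proof. exact/simplex_o_osimplex/row_free_std_frame. Qed.

Lemma lin_image_block_std (B : 'M[R]_k) (D : 'M[R]_m) :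
  lin_image (block_mx B 0 0 D) std_simplex = [set std_frame *m s | s in osimplex B].
Proof.
rewrite /lin_image -!osimplex_mulmx; congr osimplex.
by rewrite mul_block_col mul_col_mx !mulmx1 !mulmx0 !mul0mx mul1mx addr0 add0r.
Qed.

Variable Z : set 'cV[R]_(k + m) -> set 'cV[R]_(k + m).
Hypotheses (Z_body : maps_To_Ko Z) (Z_contra : SL_contravariant Z).

Lemma compact_Z_std : compact (Z std_simplex).
Proof. by case: (Z_body simplex_o_std). Qed.

Lemma Z_std0 : Z std_simplex 0.
Proof. by case: (Z_body simplex_o_std) => _ []. Qed.

(* [block_mx 1 0 C D] is the transposed inverse of a map of determinant one that
   fixes every [e_i], [i < k]. *)
Lemma Z_std_lower_block (C : 'M[R]_(m, k)) (D : 'M[R]_m) x : \det D = 1 ->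
  Z std_simplex x -> Z std_simplex (block_mx 1%:M 0 C D *m x).
Proof.
move=> detD Zx; set psi := block_mx _ _ _ _.
have det_psiT : \det psi^T = 1 by rewrite det_tr det_lblock det1 mul1r.
have psiT_unit : psi^T \in unitmx by rewrite unitmxE det_psiT unitr1.
have psiT_fixed : psi^T *m std_frame = std_frame.
  by rewrite tr_block_mx trmx1 trmx0 mul_block_col !mulmx0 !mulmx1 addr0 add0r.
have det_phi : \det (invmx psi^T) = 1 by rewrite det_inv det_psiT invr1.
have := Z_contra simplex_o_std det_phi.
rewrite {1}/lin_image -osimplex_mulmx -{1}psiT_fixed mulKmx // invmxK trmxK => ->.
by exists x.
Qed.

Lemma Z_std_usubmx x : (0 < m)%N -> Z std_simplex x -> usubmx x = 0.
Proof.
move=> m_gt0 Zx; apply/matrixP => i l; rewrite ord1 [RHS]mxE.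
pose j : 'I_m := Ordinal m_gt0.
set y := usubmx x; set z := dsubmx x.
apply: (compact_unbounded_coord_eq0 (i := rshift k j) compact_Z_std) => y_neq0 N.
pose s := (N%:R * `|y i 0| + `|z j 0|) / y i 0.
exists (block_mx 1%:M 0 (s *: delta_mx j i) 1%:M *m x).
  by apply: Z_std_lower_block; rewrite ?det1.
have Cy : (s *: delta_mx j i *m y) j 0 = s * y i 0.
  rewrite mxE (bigD1 i) //= big1 ?addr0 => [|l' /negbTE l'_neq_i].
    by rewrite !mxE !eqxx mulr1.
  by rewrite !mxE l'_neq_i andbF mulr0 mul0r.
rewrite -[x]vsubmxK mul_block_col !mul1mx mul0mx addr0 col_mxEd -/y -/z.
rewrite [(_ + z) j 0]mxE Cy divfK //.
apply: le_trans (ler_norm _); rewrite -addrA lerDl.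
by have := ler_norm (- z j 0); rewrite normrN; lra.
Qed.

Lemma Z_std_codim_gt1 : (1 < m)%N -> Z std_simplex = [set 0].
Proof.
move=> m_gt1; apply/seteqP; split=> [x Zx|_ ->]; last exact: Z_std0.
set z := dsubmx x.
have xE : x = col_mx 0 z by rewrite -(Z_std_usubmx (ltnW m_gt1) Zx) vsubmxK.
rewrite /= xE; suff -> : z = 0 by rewrite col_mx0.
apply/matrixP => j l; rewrite ord1 [RHS]mxE.
have /card_gt0P[j' /= j'_neq_j] : (0 < #|predC1 j|)%N.
  by rewrite cardC1 card_ord -subn1 subn_gt0.
apply: (compact_unbounded_coord_eq0 (i := rshift k j) compact_Z_std) => z_neq0 N.
pose s : R := N.+1%:R.
pose d : 'rV[R]_m := \row_l (if l == j then s else if l == j' then s^-1 else 1).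
exists (block_mx 1%:M 0 0 (diag_mx d) *m x).
  apply: Z_std_lower_block => //.
  rewrite det_diag (bigD1 j) //= (bigD1 j') //= big1 => [|i /andP[i_neq_j i_neq_j']].
    by rewrite !mxE eqxx (negbTE j'_neq_j) eqxx mulr1 divff // pnatr_eq0.
  by rewrite mxE (negbTE i_neq_j) (negbTE i_neq_j').
rewrite xE mul_block_col !mulmx0 mul0mx addr0 add0r col_mxEd mul_diag_mx !mxE eqxx.
by rewrite normrM ger0_norm ?ler0n // ler_wpM2r ?normr_ge0 // ler_nat.
Qed.
End StdSimplex.

Arguments std_simplex : clear implicits.

Lemma std_frame_unitmx (R : realType) k m (V : 'M[R]_(k + m, k)) : row_free V^T ->
  exists2 W : 'M[R]_(k + m), W \in unitmx & V = W *m std_frame R k m.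
Proof.
move=> freeV; have := mulmx_ebase V^T; rewrite (eqP freeV) pid_mx_row.
set L := col_ebase V^T; set U := row_ebase V^T => VTE.
exists (U^T *m block_mx L^T 0 0 1%:M).
  rewrite unitmx_mul unitmx_tr row_ebase_unit block_diag_mx_unit.
  by rewrite unitmx_tr col_ebase_unit unitmx1.
rewrite -[V]trmxK -VTE !trmx_mul tr_row_mx trmx1 trmx0 -mulmxA; congr (_ *m _).
by rewrite mul_block_col mul_col_mx !mulmx1 !mulmx0 !mul0mx mul1mx addr0 add0r.
Qed.

Lemma std_frame_SL (R : realType) k m (V : 'M[R]_(k + m, k)) : (0 < m)%N -> row_free V^T ->
  exists2 phi : 'M[R]_(k + m), \det phi = 1 & V = phi *m std_frame R k m.
Proof.
move=> m_gt0 /std_frame_unitmx[W W_unit ->].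
pose j : 'I_m := Ordinal m_gt0.
pose D : 'M[R]_m := diag_mx (\row_l (if l == j then (\det W)^-1 else 1)).
exists (W *m block_mx 1%:M 0 0 D).
  rewrite det_mulmx det_ublock det1 mul1r det_diag (bigD1 j) //= big1 => [|l /negbTE l_neq_j].
    by rewrite mxE eqxx mulr1 mulfV // -unitfE -unitmxE.
  by rewrite mxE l_neq_j.
by rewrite -mulmxA mul_block_col !mulmx1 !mulmx0 addr0 add0r.
Qed.

Lemma det_single_offdiag (R : comPzRingType) n (A : 'M[R]_n) (a b : 'I_n) :
  (forall i j, i != j -> (i, j) != (a, b) -> A i j = 0) -> \det A = \prod_i A i i.
Proof.
move=> A0; have [b_le_a|a_lt_b] := leqP b a.
  apply/det_trig/is_trig_mxP => i j i_lt_j; apply: A0; first by rewrite neq_ltn i_lt_j.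
  by apply: contraTneq i_lt_j => -[-> ->]; rewrite -leqNgt.
rewrite -det_tr det_trig => [|]; first by apply: eq_bigr => i _; rewrite mxE.
apply/is_trig_mxP => i j i_lt_j; rewrite mxE; apply: A0; first by rewrite neq_ltn i_lt_j orbT.
by apply: contraTneq i_lt_j => -[-> ->]; rewrite -leqNgt ltnW.
Qed.

Section HalvingMatrix.
Variables (R : realType) (k : nat) (a b : 'I_k).
Hypothesis a_neq_b : a != b.

Let b_neq_a : b != a. Proof. by rewrite eq_sym. Qed.

Let e_ab : 'cV[R]_k := delta_mx a 0 - delta_mx b 0.

Lemma sum_add_edge (t : 'cV[R]_k) c : \sum_i (t + c *: e_ab) i 0 = \sum_i t i 0.
Proof.
under eq_bigr => i _ do rewrite !mxE !andbT.
by rewrite big_split /= -mulr_sumr sumrB !sum_indicator subrr mulr0 addr0.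
Qed.

Lemma add_edgeE (t : 'cV[R]_k) c i : (t + c *: e_ab) i 0 =
  if i == a then t a 0 + c else if i == b then t b 0 - c else t i 0.
Proof.
rewrite !mxE !eqxx !andbT; have [->|i_neq_a] := eqVneq i a.
  by rewrite (negbTE a_neq_b) subr0 mulr1.
by case: (eqVneq i b) => [->|_] /=; rewrite ?sub0r ?subr0 ?oppr0 ?mulrN1 ?mulr0 ?addr0.
Qed.

(* It fixes [e_i] for [i != b] and maps [e_b] to the midpoint of [e_a] and [e_b]. *)
Definition halving_mx : 'M[R]_k := 1%:M + 2^-1 *: (delta_mx a b - delta_mx b b).

Lemma halving_mx_mul (t : 'cV[R]_k) : halving_mx *m t = t + (t b 0 / 2) *: e_ab.
Proof.
apply/matrixP => i l; rewrite ord1 mulmxDl mul1mx -scalemxAl mulmxBl !mxE.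
rewrite (bigD1 b) //= big1 ?addr0 => [|j /negbTE j_neq_b]; last by rewrite mxE j_neq_b andbF mul0r.
rewrite (bigD1 b) //= big1 ?addr0 => [|j /negbTE j_neq_b]; last by rewrite mxE j_neq_b andbF mul0r.
by rewrite !mxE !eqxx !andbT; case: (i == a); case: (i == b) => /=; lra.
Qed.

Lemma det_halving_mx : \det halving_mx = 2^-1.
Proof.
rewrite (@det_single_offdiag _ _ _ a b) => [|i j i_neq_j]; last first.
  rewrite xpair_eqE !mxE (negbTE i_neq_j) => /negbTE ->.
  have -> : (i == b) && (j == b) = false by apply: contraNF i_neq_j => /andP[/eqP-> /eqP->].
  by rewrite /= subrr mulr0 addr0.
rewrite (bigD1 b) //= big1 => [|i /negbTE i_neq_b]; rewrite !mxE !eqxx ?i_neq_b ?andbF /=.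
  by rewrite eq_sym (negbTE a_neq_b) /=; lra.
by lra.
Qed.

Lemma osimplex_halving_mx :
  osimplex halving_mx = [set s | simplex_weights s /\ s b 0 <= s a 0].
Proof.
apply/seteqP; split=> [_ [t [t_ge0 t_le1] <-]|s [[s_ge0 s_le1] s_ba]].
  rewrite /= halving_mx_mul !add_edgeE !eqxx (negbTE b_neq_a).
  have ta_ge0 := t_ge0 a; have tb_ge0 := t_ge0 b.
  split; last lra; split; last by rewrite sum_add_edge.
  by move=> i; rewrite add_edgeE; case: ifP => _; [|case: ifP => _]; rewrite ?t_ge0 //; lra.
exists (s + (- s b 0) *: e_ab); last first.
  rewrite halving_mx_mul add_edgeE eqxx (negbTE b_neq_a) -addrA -scalerDl.
  have -> : - s b 0 + (s b 0 - - s b 0) / 2 = 0 by lra.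
  by rewrite scale0r addr0.
split; last by rewrite sum_add_edge.
move=> i; rewrite add_edgeE; have sb_ge0 := s_ge0 b.
by case: ifP => _; [|case: ifP => _]; rewrite ?s_ge0 //; lra.
Qed.

Lemma bisector_halving_mx :
  [set s | simplex_weights s /\ s a 0 = s b 0] =
  [set halving_mx *m t | t in [set t | simplex_weights t /\ t a 0 = 0]].
Proof.
have entries (t : 'cV[R]_k) :
    (halving_mx *m t) a 0 = t a 0 + t b 0 / 2 /\ (halving_mx *m t) b 0 = t b 0 / 2.
  by rewrite halving_mx_mul !add_edgeE !eqxx (negbTE b_neq_a); split; lra.
apply/seteqP; split=> [s [ws s_ab]|_ [t [wt t_a0] <-]].
  have [t wt s_eq] : osimplex halving_mx s by rewrite osimplex_halving_mx; split; rewrite // s_ab.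
  exists t => //; split=> //.
  by move: s_ab; rewrite -s_eq; have [-> ->] := entries t; lra.
have wBt : osimplex halving_mx (halving_mx *m t) by exists t.
rewrite osimplex_halving_mx in wBt; case: wBt => wBt _; split=> //.
by have [-> ->] := entries t; rewrite t_a0 add0r.
Qed.
End HalvingMatrix.

Lemma sum_vsubmx (R : realType) m n (t : 'cV[R]_(m + n)) :
  \sum_i t i 0 = \sum_i usubmx t i 0 + \sum_i dsubmx t i 0.
Proof. by rewrite big_split_ord /=; congr (_ + _); apply: eq_bigr => i _; rewrite mxE. Qed.

Lemma osimplex_face0 (R : realType) l :
  osimplex (col_mx 0 1%:M : 'M[R]_(1 + l, l)) = [set t | simplex_weights t /\ t ord0 0 = 0].
Proof.
have t0E (t : 'cV[R]_(1 + l)) : t ord0 0 = usubmx t 0 0.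
  by rewrite mxE; congr (t _ 0); apply: val_inj.
apply/seteqP; split=> [_ [u [u_ge0 u_le1] <-]|t [[t_ge0 t_le1] t0]].
  rewrite /= mul_col_mx mul0mx mul1mx t0E col_mxKu mxE; split=> //; split.
    by move=> i; rewrite mxE; case: fintype.split => j; rewrite ?mxE ?u_ge0.
  by rewrite (@sum_vsubmx _ 1 l) col_mxKu col_mxKd big1 ?add0r // => i _; rewrite mxE.
have ut0 : usubmx t = 0 by apply/matrixP => i j; rewrite !ord1 -t0E t0 mxE.
exists (dsubmx t); last by rewrite mul_col_mx mul0mx mul1mx -ut0 vsubmxK.
split=> [i|]; first by rewrite mxE.
have sum0 : \sum_i usubmx t i 0 = 0 by rewrite ut0 big1 // => i _; rewrite mxE.
by move: t_le1; rewrite (@sum_vsubmx _ 1 l) sum0 add0r.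
Qed.

Lemma row_free_face0 (R : realType) l : row_free (col_mx 0 1%:M : 'M[R]_(1 + l, l))^T.
Proof.
apply/row_freeP; exists (col_mx 0 1%:M).
by rewrite tr_col_mx trmx0 trmx1 mul_row_col mul0mx mul1mx add0r.
Qed.

Section CodimensionOne.
Variables (R : realType) (p : nat).
Local Notation k := p.+2.
Local Notation std := (std_simplex R k 1).

Let a : 'I_k := ord0.
Let b : 'I_k := lift ord0 ord0.
Let a_neq_b : a != b := neq_lift ord0 ord0.
Let b_neq_a : b != a. Proof. by rewrite eq_sym. Qed.

Let halves_cover :
  osimplex (halving_mx R a b) `|` osimplex (halving_mx R b a) = @simplex_weights R k.
Proof.
rewrite !osimplex_halving_mx //; apply/seteqP; split=> [s [[]|[]]|s ws] //.
by have [s_ba|s_ab] := leP (s b 0) (s a 0); [left|right; split=> //; apply: ltW].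
Qed.

Let halves_meet : osimplex (halving_mx R a b) `&` osimplex (halving_mx R b a) =
  osimplex (halving_mx R a b *m (col_mx 0 1%:M : 'M[R]_(1 + p.+1, p.+1))).
Proof.
rewrite osimplex_mulmx osimplex_face0 -bisector_halving_mx // !osimplex_halving_mx //.
apply/seteqP; split=> [s [[ws s_ba] [_ s_ab]]|s [ws s_ab]]; last by rewrite /= s_ab lexx.
by split=> //; apply/le_anti; rewrite s_ab.
Qed.

Let halving_ext (H : 'M[R]_k) : 'M[R]_(k + 1) := block_mx H 0 0 2%:M.

Let det_halving_ext (i j : 'I_k) : i != j -> \det (halving_ext (halving_mx R i j)) = 1.
Proof. by move=> ij; rewrite det_ublock det_halving_mx // det_scalar expr1 mulVf. Qed.

Let halving_ext_unit (i j : 'I_k) : i != j -> halving_ext (halving_mx R i j) \in unitmx.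
Proof. by move=> ij; rewrite unitmxE det_halving_ext // unitr1. Qed.

Let half (H : 'M[R]_k) := lin_image (halving_ext H) std.

Let halves_cup : half (halving_mx R a b) `|` half (halving_mx R b a) = std.
Proof. by rewrite /half !lin_image_block_std -image_setU halves_cover. Qed.

Let simplex_o_halves_cap : simplex_o (half (halving_mx R a b) `&` half (halving_mx R b a)).
Proof.
rewrite /half !lin_image_block_std -image_setI_inj; last exact: std_frame_inj.
rewrite halves_meet -osimplex_mulmx; apply/simplex_o_osimplex/row_free_trmx_mul.
  exact: row_free_std_frame.
apply: row_free_trmx_mul; first by rewrite row_free_unit unitmx_tr unitmxE det_halving_mx ?unitfE.
exact: row_free_face0.
Qed.

Variable Z : set 'cV[R]_(k + 1) -> set 'cV[R]_(k + 1).
Hypotheses (Z_body : maps_To_Ko Z) (Z_val : Linf_valuation Z) (Z_contra : SL_contravariant Z).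

Let Z_half (i j : 'I_k) : i != j -> Z (half (halving_mx R i j)) = [set 2^-1 *: x | x in Z std].
Proof.
move=> ij; rewrite /half Z_contra ?det_halving_ext //; last exact: simplex_o_std.
apply: (eq_imagel (A := Z std)) => x Zx.
rewrite -[x]vsubmxK (Z_std_usubmx Z_body Z_contra) //.
rewrite invmx_block_diag; last exact: halving_ext_unit.
rewrite tr_block_mx !trmx0 mul_block_col !mulmx0 !mul0mx addr0 add0r.
by rewrite invmx_scalar tr_scalar_mx mul_scalar_mx scale_col_mx scaler0.
Qed.

Lemma Z_std_codim1 : Z std = [set 0].
Proof.
have [compactZ [convexZ Z0]] := Z_body (simplex_o_std R k 1).
have simplex_o_half (i j : 'I_k) : i != j -> simplex_o (half (halving_mx R i j)).
  by move=> ij; apply/simplex_o_lin_image/simplex_o_std/halving_ext_unit.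
have simplex_o_cup : simplex_o (half (halving_mx R a b) `|` half (halving_mx R b a)).
  by rewrite halves_cup; apply: simplex_o_std.
have := Z_val (simplex_o_half _ _ a_neq_b) (simplex_o_half _ _ b_neq_a) simplex_o_cup
  simplex_o_halves_cap.
rewrite /linf_add halves_cup !Z_half // setUid => hull_eq.
have Z_sub_half : Z std `<=` [set 2^-1 *: x | x in Z std].
  move=> x Zx.
  have : conv_hull (Z std `|` Z (half (halving_mx R a b) `&` half (halving_mx R b a))) x.
    by move=> C _; apply; left.
  rewrite hull_eq; apply=> // _ _ t [y Zy <-] [z Zz <-] t_ge0 t_le1.
  by exists ((1 - t) *: y + t *: z); [exact: convexZ|rewrite scalerDr !scalerA mulrC (mulrC t)].
have Z_double N x : Z std x -> Z std (2 ^+ N *: x).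
  elim: N x => [|N IHN] x Zx; first by rewrite scale1r.
  have [y Zy yE] := Z_sub_half _ (IHN x Zx).
  by rewrite exprS -scalerA -yE scalerA divff ?scale1r ?pnatr_eq0.
apply/seteqP; split=> [x Zx|_ ->] //; apply/matrixP => i l; rewrite ord1 [RHS]mxE.
apply: (compact_unbounded_coord_eq0 (i := i) compactZ) => _ N.
exists (2 ^+ N *: x); first exact: Z_double.
rewrite mxE normrM ler_wpM2r ?normr_ge0 // ger0_norm ?exprn_ge0 //.
by rewrite -natrX ler_nat ltnW // ltn_expl.
Qed.
End CodimensionOne.

Lemma Z_std_eq0 (R : realType) k m (Z : set 'cV[R]_(k + m) -> set 'cV[R]_(k + m)) :
  (0 < m)%N -> (3 <= k + m)%N ->
  maps_To_Ko Z -> Linf_valuation Z -> SL_contravariant Z -> Z (std_simplex R k m) = [set 0].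
Proof.
move=> m_gt0 n_ge3 Z_body Z_val Z_contra.
have [m_gt1|m_le1] := ltnP 1 m; first exact: Z_std_codim_gt1.
have m1 : m = 1%N by apply/eqP; rewrite eqn_leq m_le1.
subst m; rewrite addn1 ltnS in n_ge3.
have [p kE] : exists p, k = p.+2 by exists k.-2; rewrite -subn2 -addn2 subnK.
by subst k; apply: Z_std_codim1.
Qed.

Lemma Z_osimplex_eq0 (R : realType) k m (Z : set 'cV[R]_(k + m) -> set 'cV[R]_(k + m))
    (V : 'M[R]_(k + m, k)) : (0 < m)%N -> (3 <= k + m)%N ->
  maps_To_Ko Z -> Linf_valuation Z -> SL_contravariant Z -> row_free V^T ->
  Z (osimplex V) = [set 0].
Proof.
move=> m_gt0 n_ge3 Z_body Z_val Z_contra /(std_frame_SL m_gt0)[phi det_phi ->].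
have -> : osimplex (phi *m std_frame R k m) = lin_image phi (std_simplex R k m).
  exact: osimplex_mulmx.
rewrite Z_contra //; last exact: simplex_o_std.
by rewrite (Z_std_eq0 m_gt0 n_ge3 Z_body Z_val Z_contra) /lin_image image_set1 mulmx0.
Qed.

Unset Implicit Arguments.

Theorem lemma3p1 (R : realType) (n : nat) (Z : set 'cV[R]_n -> set 'cV[R]_n) :
  (3 <= n)%N ->
  maps_To_Ko Z -> Linf_valuation Z -> SL_contravariant Z ->
  forall T, simplex_o T -> ~ affdim_ge T n -> Z T = [set 0].
Proof.
move=> n_ge3 Z_body Z_val Z_contra T /simplex_oP[k [V [freeV ->]]] low_dim.
have k_lt_n : (k < n)%N.
  rewrite ltn_neqAle -{2}(eqP freeV) rank_leq_col andbT.
  by apply/eqP => k_eq_n; subst k; exact/low_dim/affdim_ge_osimplex.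
have [m nE] : exists m, n = (k + m)%N by exists (n - k)%N; rewrite subnKC // ltnW.
subst n; apply: Z_osimplex_eq0 => //.
by rewrite -(ltn_add2l k) addn0.
Qed.
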